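(* Let $0\le t_1<t_2$, let $m,k>0$ be constants, let $f\in C[t_1,t_2]$, and let $u_1,v_1\in\mathbb{R}$. For $u\in C^2[t_1,t_2]$ define $$I^t[u]=\frac{m}{2}\,[u',u']_{t_1}^{t_2}+\frac{k}{2}\,[u,u]_{t_1}^{t_2}-[f,u]_{t_1}^{t_2}-m v_1\,u(t_2),$$ and let $\mathcal{D}^t=\{\phi\in C^2[t_1,t_2]:\ \phi(t_1)=u_1\}$. Suppose $u\in\mathcal{D}^t$ is a stationary point of $I^t$ on $\mathcal{D}^t$, i.e. $\frac{d}{d\varepsilon}I^t[u+\varepsilon\eta]\big|_{\varepsilon=0}=0$ for every $\eta\in C^2[t_1,t_2]$ with $\eta(t_1)=0$. Then $u$ solves the initial value problem $$m u''(s)+k u(s)=f(s),\quad s\in(t_1,t_2),\qquad u(t_1)=u_1,\quad u'(t_1)=v_1 .$$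
   Context: For an interval $[t_1,t_2]$ with $t_1\ge0$ and functions $g,h\in L^2(t_1,t_2)$, the convolution over $[t_1,t_2]$ is defined as $$[g,h]_{t_1}^{t_2}=\int_0^{t_2-t_1}g(t_1+s)\,h(t_2-s)\,ds=\int_{t_1}^{t_2}g(s)\,h(t_1+t_2-s)\,ds .$$ (In the paper the last term of $I^t$ is written as $[\tilde f^1,u]_{t_1}^{t_2}$ with $\tilde f^1(s)=m v_1\delta(s-t_1)$, which by convention evaluates to $m v_1 u(t_2)$.) *)

From Stdlib Require Import Reals.
From Coquelicot Require Import Coquelicot.
Open Scope R_scope.

Definition cont_on (f : R -> R) (a b : R) : Prop :=
  forall x, a <= x <= b -> forall eps, 0 < eps -> exists delta, 0 < delta /\
    forall y, a <= y <= b -> Rabs (y - x) < delta -> Rabs (f y - f x) < eps.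

Definition deriv_on (f g : R -> R) (a b : R) : Prop :=
  forall x, a <= x <= b -> forall eps, 0 < eps -> exists delta, 0 < delta /\
    forall y, a <= y <= b -> Rabs (y - x) < delta ->
      Rabs (f y - f x - g x * (y - x)) <= eps * Rabs (y - x).

Definition C2_on (phi dphi ddphi : R -> R) (a b : R) : Prop :=
  deriv_on phi dphi a b /\ deriv_on dphi ddphi a b /\ cont_on ddphi a b.

(* The convolution over [t1,t2]:  [g,h]_{t1}^{t2} = int_{t1}^{t2} g(s) h(t1+t2-s) ds *)
Definition conv (g h : R -> R) (t1 t2 : R) : R :=
  RInt (fun s => g s * h (t1 + t2 - s)) t1 t2.

Definition It (m k v1 t1 t2 : R) (f phi dphi : R -> R) : R :=
  m / 2 * conv dphi dphi t1 t2 + k / 2 * conv phi phi t1 t2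
  - conv f phi t1 t2 - m * v1 * phi t2.

From Stdlib Require Import Reals Lra.
From Coquelicot Require Import Coquelicot.
Open Scope R_scope.

(* 1. First variation.  Expanding the convolutions, e |-> I^t[u + e eta] is a
      quadratic polynomial in e.  Using the symmetry [g,h] = [h,g] and the
      integration by parts  [u',eta'] = [u'',eta] + u'(t1) eta(t2)  (valid
      when eta(t1) = 0), its slope at e = 0 is
          [m u'' + k u - f, eta] + m (u'(t1) - v1) eta(t2).
   2. Fundamental lemma.  Testing with the C^2 bumps max(0,(s-a)(b-s))^3,
      reflected through the midpoint so that the convolution becomes an
      ordinary weighted integral, forces m u'' + k u - f = 0 in (t1,t2).
   3. Testing then with eta(r) = r - t1 leaves m (u'(t1) - v1)(t2 - t1) = 0. *)

Definition clamp (a b x : R) : R := Rmax a (Rmin b x).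

Lemma clamp_in a b x : a <= b -> a <= clamp a b x <= b.
Proof. intros; unfold clamp, Rmax, Rmin; repeat destruct Rle_dec; lra. Qed.

Lemma clamp_id a b x : a <= x <= b -> clamp a b x = x.
Proof. intros; unfold clamp, Rmax, Rmin; repeat destruct Rle_dec; lra. Qed.

Lemma clamp_lip a b x y : a <= b -> Rabs (clamp a b y - clamp a b x) <= Rabs (y - x).
Proof.
  intros; unfold clamp, Rmax, Rmin; repeat destruct Rle_dec;
  unfold Rabs; repeat destruct Rcase_abs; lra.
Qed.

Lemma clamp_reflect a b y : a <= b -> a + b - clamp a b y = clamp a b (a + b - y).
Proof. intros; unfold clamp, Rmax, Rmin; repeat destruct Rle_dec; lra. Qed.

Lemma clamp_near a b x : a < b -> a <= x <= b ->
  exists rho, 0 < rho /\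
    forall y, Rabs (y - x) < rho -> clamp a b y = y \/ clamp a b y = x.
Proof.
  intros Hab Hx.
  exists (Rmin (if Rlt_dec a x then x - a else b - a)
               (if Rlt_dec x b then b - x else b - a)).
  split.
  - apply Rmin_pos; destruct Rlt_dec; lra.
  - intros y Hy. apply Rabs_def2 in Hy.
    pose proof (Rmin_l (if Rlt_dec a x then x - a else b - a)
                       (if Rlt_dec x b then b - x else b - a)).
    pose proof (Rmin_r (if Rlt_dec a x then x - a else b - a)
                       (if Rlt_dec x b then b - x else b - a)).
    unfold clamp, Rmax, Rmin in *; repeat destruct Rle_dec; repeat destruct Rlt_dec;
    (left; lra) || (right; lra).
Qed.

Lemma is_derive_of_bound (F : R -> R) x l :
  (forall eps, 0 < eps -> exists delta, 0 < delta /\ forall y, Rabs (y - x) < delta ->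
     Rabs (F y - F x - l * (y - x)) <= eps * Rabs (y - x)) -> is_derive F x l.
Proof.
  intros H. apply is_derive_Reals. intros eps He.
  destruct (H (eps / 2)) as [d [Hd Hb]]; [lra|].
  exists (mkposreal d Hd). intros h Hh0 Hh. simpl in Hh.
  specialize (Hb (x + h)). replace (x + h - x) with h in Hb by ring.
  specialize (Hb Hh).
  replace ((F (x + h) - F x) / h - l) with ((F (x + h) - F x - l * h) / h) by (field; auto).
  assert (Hpos : 0 < Rabs h) by (apply Rabs_pos_lt; auto).
  unfold Rdiv. rewrite Rabs_mult, Rabs_inv.
  apply Rle_lt_trans with (eps / 2 * Rabs h * / Rabs h).
  - apply Rmult_le_compat_r; [left; apply Rinv_0_lt_compat|]; assumption.
  - field_simplify; lra.
Qed.

Lemma bound_of_is_derive (F : R -> R) x l : is_derive F x l ->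
  forall eps, 0 < eps -> exists delta, 0 < delta /\ forall y, Rabs (y - x) < delta ->
     Rabs (F y - F x - l * (y - x)) <= eps * Rabs (y - x).
Proof.
  intros H eps He. apply is_derive_Reals in H.
  destruct (H eps He) as [d Hd]. exists d. split; [apply cond_pos|].
  intros y Hy. destruct (Req_dec y x) as [->|Hne].
  - replace (F x - F x - l * (x - x)) with 0 by ring.
    rewrite Rminus_diag, Rabs_R0. lra.
  - assert (Hh : y - x <> 0) by lra.
    specialize (Hd (y - x) Hh Hy). replace (x + (y - x)) with y in Hd by ring.
    replace (F y - F x - l * (y - x)) with ((y - x) * ((F y - F x) / (y - x) - l))
      by (field; auto).
    rewrite Rabs_mult, Rmult_comm. apply Rmult_le_compat_r; [apply Rabs_pos | lra].
Qed.

Lemma cont_on_of_continuous (F H : R -> R) a b :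
  (forall x, a <= x <= b -> H x = F x) ->
  (forall x, a <= x <= b -> continuous H x) -> cont_on F a b.
Proof.
  intros HF HC x Hx eps He.
  pose proof (HC x Hx) as Hc. apply continuity_pt_filterlim in Hc.
  destruct (Hc eps He) as [d [Hd Hy]].
  exists d. split; [exact Hd|]. intros y Hyab Hyx.
  rewrite <- (HF x Hx), <- (HF y Hyab).
  destruct (Req_dec y x) as [->|Hne]; [rewrite Rminus_diag, Rabs_R0; exact He|].
  apply Hy. split; [split; [exact I | congruence] | exact Hyx].
Qed.

Lemma deriv_on_of_is_derive (F G : R -> R) a b :
  (forall x, a <= x <= b -> is_derive F x (G x)) -> deriv_on F G a b.
Proof.
  intros H x Hx eps He.
  destruct (bound_of_is_derive _ _ _ (H x Hx) eps He) as [d [Hd Hy]].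
  exists d; split; auto.
Qed.

Lemma C2_on_of_global (e de dde : R -> R) a b :
  (forall x, is_derive e x (de x)) -> (forall x, is_derive de x (dde x)) ->
  (forall x, continuous dde x) -> C2_on e de dde a b.
Proof.
  intros H1 H2 H3. split; [|split].
  - apply deriv_on_of_is_derive; auto.
  - apply deriv_on_of_is_derive; auto.
  - apply (cont_on_of_continuous dde dde); auto.
Qed.

Definition ext (F G : R -> R) (a b x : R) : R :=
  F (clamp a b x) + G (clamp a b x) * (x - clamp a b x).

Lemma ext_eq F G a b x : a <= x <= b -> ext F G a b x = F x.
Proof. intros Hx. unfold ext. rewrite clamp_id by exact Hx. ring. Qed.

Lemma ext_is_derive F G a b x : a < b -> deriv_on F G a b -> a <= x <= b ->
  is_derive (ext F G a b) x (G x).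
Proof.
  intros Hab HD Hx. apply is_derive_of_bound. intros eps He.
  destruct (HD x Hx eps He) as [d [Hd Hy]].
  destruct (clamp_near a b x Hab Hx) as [rho [Hrho Hnear]].
  exists (Rmin d rho). split; [apply Rmin_pos; assumption|].
  intros y Hyx. rewrite (ext_eq F G a b x Hx). unfold ext.
  destruct (Hnear y (Rlt_le_trans _ _ _ Hyx (Rmin_r _ _))) as [Ey|Ex].
  - rewrite Ey.
    replace (F y + G y * (y - y) - F x - G x * (y - x)) with (F y - F x - G x * (y - x))
      by ring.
    apply Hy; [rewrite <- Ey; apply clamp_in; lra|].
    exact (Rlt_le_trans _ _ _ Hyx (Rmin_l _ _)).
  - rewrite Ex. replace (F x + G x * (y - x) - F x - G x * (y - x)) with 0 by ring.
    rewrite Rabs_R0. apply Rmult_le_pos; [lra | apply Rabs_pos].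
Qed.

Lemma deriv_on_cont_on F G a b : a < b -> deriv_on F G a b -> cont_on F a b.
Proof.
  intros Hab HD. apply (cont_on_of_continuous F (ext F G a b)).
  - intros x Hx. apply ext_eq; exact Hx.
  - intros x Hx. apply (ex_derive_continuous (K := R_AbsRing) (V := R_NormedModule)).
    exists (G x).
    apply ext_is_derive; assumption.
Qed.

Lemma is_derive_comp_R (F G : R -> R) x dF dG :
  is_derive F (G x) dF -> is_derive G x dG -> is_derive (fun y => F (G y)) x (dF * dG).
Proof.
  intros HF HG. replace (dF * dG) with (scal dG dF) by (rewrite Rmult_comm; reflexivity).
  exact (is_derive_comp F G x dF dG HF HG).
Qed.

Lemma is_derive_mult_R (F G : R -> R) x dF dG :
  is_derive F x dF -> is_derive G x dG ->
  is_derive (fun y => F y * G y) x (dF * G x + F x * dG).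
Proof. intros HF HG. exact (is_derive_mult F G x dF dG HF HG Rmult_comm). Qed.

Lemma is_derive_continuous (F : R -> R) x l : is_derive F x l -> continuous F x.
Proof.
  intros H. apply (ex_derive_continuous (K := R_AbsRing) (V := R_NormedModule)).
  exists l; exact H.
Qed.

Lemma is_derive_pos_part (p dp : R -> R) t :
  (forall x, is_derive p x (dp x)) -> p 0 = 0 -> dp 0 = 0 ->
  is_derive (fun s => p (Rmax 0 s)) t (dp (Rmax 0 t)).
Proof.
  intros Hp Hp0 Hdp0.
  destruct (Rlt_or_le 0 t) as [Hpos|Hnpos]; [|destruct (Rlt_or_le t 0) as [Hneg|Hzero]].
  - rewrite Rmax_right by lra.
    apply is_derive_ext_loc with p; [|apply Hp].
    apply (filter_imp (fun y => 0 < y)); [|exact (open_gt 0 t Hpos)].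
    intros y Hy. rewrite Rmax_right by lra. reflexivity.
  - rewrite Rmax_left, Hdp0 by lra.
    apply is_derive_ext_loc with (fun _ => 0); [|exact (is_derive_const 0 t)].
    apply (filter_imp (fun y => y < 0)); [|exact (open_lt 0 t Hneg)].
    intros y Hy. rewrite Rmax_left by lra. symmetry; exact Hp0.
  - replace t with 0 by lra. rewrite Rmax_left, Hdp0 by lra.
    apply is_derive_of_bound. intros eps He.
    destruct (bound_of_is_derive p 0 (dp 0) (Hp 0) eps He) as [d [Hd Hy]].
    exists d. split; [exact Hd|]. intros y Hyd.
    rewrite (Rmax_left 0 0), Hp0 by lra.
    destruct (Rle_lt_dec y 0) as [Hyn|Hyp].
    + rewrite Rmax_left, Hp0 by lra. replace (0 - 0 - 0 * (y - 0)) with 0 by ring.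
      rewrite Rabs_R0. apply Rmult_le_pos; [lra | apply Rabs_pos].
    + rewrite Rmax_right by lra. specialize (Hy y Hyd). rewrite Hp0, Hdp0 in Hy. exact Hy.
Qed.

Definition ramp3 (t : R) : R := Rmax 0 t ^ 3.
Definition dramp3 (t : R) : R := 3 * Rmax 0 t ^ 2.
Definition ddramp3 (t : R) : R := 6 * Rmax 0 t.

Lemma ramp3_derive t : is_derive ramp3 t (dramp3 t).
Proof.
  apply (is_derive_pos_part (fun x => x ^ 3) (fun x => 3 * x ^ 2));
    [intros x; auto_derive; auto; ring | ring | ring].
Qed.

Lemma dramp3_derive t : is_derive dramp3 t (ddramp3 t).
Proof.
  apply (is_derive_pos_part (fun x => 3 * x ^ 2) (fun x => 6 * x));
    [intros x; auto_derive; auto; ring | ring | ring].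
Qed.

Lemma ddramp3_cont t : continuous ddramp3 t.
Proof.
  apply continuous_ext with (fun s => 3 * (s + Rabs s)).
  { intros s. unfold ddramp3, Rmax, Rabs. destruct Rle_dec, Rcase_abs; lra. }
  apply (continuous_mult (fun _ => 3) (fun s => s + Rabs s)); [apply continuous_const|].
  apply (continuous_plus (fun s => s) Rabs); [apply continuous_id | apply continuous_Rabs].
Qed.

Definition bump (a b x : R) : R := ramp3 ((x - a) * (b - x)).
Definition dbump (a b x : R) : R := dramp3 ((x - a) * (b - x)) * (a + b - 2 * x).
Definition ddbump (a b x : R) : R :=
  ddramp3 ((x - a) * (b - x)) * (a + b - 2 * x) * (a + b - 2 * x)
  + dramp3 ((x - a) * (b - x)) * (-2).

Lemma bump_derive a b x : is_derive (bump a b) x (dbump a b x).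
Proof.
  apply (is_derive_comp_R ramp3 (fun y => (y - a) * (b - y))); [apply ramp3_derive|].
  auto_derive; auto; ring.
Qed.

Lemma dbump_derive a b x : is_derive (dbump a b) x (ddbump a b x).
Proof.
  apply (is_derive_mult_R (fun y => dramp3 ((y - a) * (b - y))) (fun y => a + b - 2 * y));
    [|auto_derive; auto; ring].
  apply (is_derive_comp_R dramp3 (fun y => (y - a) * (b - y))); [apply dramp3_derive|].
  auto_derive; auto; ring.
Qed.

Lemma ddbump_cont a b x : continuous (ddbump a b) x.
Proof.
  assert (HQ : continuous (fun y => (y - a) * (b - y)) x)
    by (apply (is_derive_continuous _ _ (a + b - 2 * x)); auto_derive; auto; ring).
  assert (HL : continuous (fun y => a + b - 2 * y) x)
    by (apply (is_derive_continuous _ _ (-2)); auto_derive; auto; ring).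
  unfold ddbump.
  apply (continuous_plus (fun y => ddramp3 ((y - a) * (b - y)) * (a + b - 2 * y)
                                   * (a + b - 2 * y))
                         (fun y => dramp3 ((y - a) * (b - y)) * -2)).
  - apply (continuous_mult (fun y => ddramp3 ((y - a) * (b - y)) * (a + b - 2 * y))
                           (fun y => a + b - 2 * y)); [|exact HL].
    apply (continuous_mult (fun y => ddramp3 ((y - a) * (b - y)))
                           (fun y => a + b - 2 * y)); [|exact HL].
    apply (continuous_comp _ ddramp3); [exact HQ | apply ddramp3_cont].
  - apply (continuous_mult (fun y => dramp3 ((y - a) * (b - y))) (fun _ => -2));
      [|apply continuous_const].
    apply (continuous_comp _ dramp3); [exact HQ|].
    apply (is_derive_continuous _ _ _ (dramp3_derive _)).
Qed.

Lemma bump_nonneg a b x : 0 <= bump a b x.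
Proof. unfold bump, ramp3. apply pow_le, Rmax_l. Qed.

Lemma bump_pos a b x : a < x < b -> 0 < bump a b x.
Proof.
  intros Hx. unfold bump, ramp3. rewrite Rmax_right by nra. apply pow_lt. nra.
Qed.

Lemma bump_out a b x : (x - a) * (b - x) <= 0 -> bump a b x = 0.
Proof. intros H. unfold bump, ramp3. rewrite Rmax_left by exact H. ring. Qed.

Lemma bump_reflect T a b x : bump (T - b) (T - a) (T - x) = bump a b x.
Proof. unfold bump. f_equal. ring. Qed.

Lemma RInt_plusR (F G : R -> R) a b : ex_RInt F a b -> ex_RInt G a b ->
  RInt (fun x => F x + G x) a b = RInt F a b + RInt G a b.
Proof. intros HF HG; exact (RInt_plus F G a b HF HG). Qed.

Lemma RInt_minusR (F G : R -> R) a b : ex_RInt F a b -> ex_RInt G a b ->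
  RInt (fun x => F x - G x) a b = RInt F a b - RInt G a b.
Proof. intros HF HG; exact (RInt_minus F G a b HF HG). Qed.

Lemma RInt_extR (F G : R -> R) a b :
  (forall x, Rmin a b < x < Rmax a b -> F x = G x) -> RInt F a b = RInt G a b.
Proof. apply RInt_ext. Qed.

Lemma RInt_scalR (F : R -> R) a b c : ex_RInt F a b ->
  RInt (fun x => c * F x) a b = c * RInt F a b.
Proof. intros HF; exact (RInt_scal F a b c HF). Qed.

Section Convolution.
Variables t1 t2 : R.
Hypothesis Hle : t1 <= t2.

(* F is continuous on [t1,t2] in the sense that F o clamp is continuous
   everywhere; this is what Coquelicot's integrability results require. *)
Definition cont_clamp (F : R -> R) : Prop :=
  forall x, continuous (fun y => F (clamp t1 t2 y)) x.

Lemma cont_clamp_of_cont_on F : cont_on F t1 t2 -> cont_clamp F.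
Proof.
  intros HF x. apply continuity_pt_filterlim. intros eps He.
  destruct (HF (clamp t1 t2 x) (clamp_in t1 t2 x Hle) eps He) as [d [Hd Hy]].
  exists d. split; [exact Hd|]. intros y [_ Hyx]. simpl in *. unfold R_dist in *.
  apply Hy; [apply clamp_in; exact Hle|].
  eapply Rle_lt_trans; [apply clamp_lip; exact Hle | exact Hyx].
Qed.

Lemma cont_clamp_of_continuous F : (forall x, continuous F x) -> cont_clamp F.
Proof.
  intros H. apply cont_clamp_of_cont_on, (cont_on_of_continuous F F); auto.
Qed.

Lemma cont_clamp_mult F G : cont_clamp F -> cont_clamp G -> cont_clamp (fun s => F s * G s).
Proof. intros HF HG x. exact (continuous_mult _ _ x (HF x) (HG x)). Qed.

Lemma cont_clamp_plus F G : cont_clamp F -> cont_clamp G -> cont_clamp (fun s => F s + G s).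
Proof. intros HF HG x. exact (continuous_plus _ _ x (HF x) (HG x)). Qed.

Lemma cont_clamp_minus F G : cont_clamp F -> cont_clamp G -> cont_clamp (fun s => F s - G s).
Proof. intros HF HG x. exact (continuous_minus _ _ x (HF x) (HG x)). Qed.

Lemma cont_clamp_scal c F : cont_clamp F -> cont_clamp (fun s => c * F s).
Proof. intros HF x. exact (continuous_mult _ _ x (continuous_const c x) (HF x)). Qed.

Lemma cont_clamp_reflect F : cont_clamp F -> cont_clamp (fun s => F (t1 + t2 - s)).
Proof.
  intros HF x.
  apply continuous_ext with (fun y => F (clamp t1 t2 (t1 + t2 - y))).
  { intros y. rewrite <- clamp_reflect by exact Hle. reflexivity. }
  apply (continuous_comp (fun y => t1 + t2 - y) (fun z => F (clamp t1 t2 z))); [|apply HF].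
  apply (is_derive_continuous _ _ (-1)). auto_derive; auto; ring.
Qed.

Lemma cont_clamp_ex_RInt F : cont_clamp F -> ex_RInt F t1 t2.
Proof.
  intros H. apply ex_RInt_ext with (fun y => F (clamp t1 t2 y)).
  - intros x Hx. rewrite Rmin_left, Rmax_right in Hx by exact Hle.
    rewrite clamp_id; [reflexivity | lra].
  - apply (ex_RInt_continuous (V := R_CompleteNormedModule)). intros; apply H.
Qed.

Lemma cont_clamp_conv G H : cont_clamp G -> cont_clamp H ->
  cont_clamp (fun s => G s * H (t1 + t2 - s)).
Proof. intros HG HH. apply cont_clamp_mult; [exact HG | apply cont_clamp_reflect, HH]. Qed.

Local Ltac integrable :=
  apply cont_clamp_ex_RInt;
  repeat first [apply cont_clamp_plus | apply cont_clamp_scal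
               | apply cont_clamp_conv; assumption].

(* The convolution is symmetric: substitute s |-> t1 + t2 - s. *)
Lemma conv_sym G H : cont_clamp G -> cont_clamp H -> conv G H t1 t2 = conv H G t1 t2.
Proof.
  intros HG HH. unfold conv.
  set (P := fun s => H s * G (t1 + t2 - s)).
  assert (HP : ex_RInt P t1 t2) by integrable.
  assert (HP' : ex_RInt P ((-1) * t1 + (t1 + t2)) ((-1) * t2 + (t1 + t2))).
  { replace ((-1) * t1 + (t1 + t2)) with t2 by ring.
    replace ((-1) * t2 + (t1 + t2)) with t1 by ring.
    apply ex_RInt_swap; exact HP. }
  pose proof (RInt_comp_lin P (-1) (t1 + t2) t1 t2 HP') as Hsub.
  replace ((-1) * t1 + (t1 + t2)) with t2 in Hsub by ring.
  replace ((-1) * t2 + (t1 + t2)) with t1 in Hsub by ring.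
  rewrite <- (opp_RInt_swap P t1 t2 HP) in Hsub.
  assert (Hint : RInt (fun y => scal (-1) (P (-1 * y + (t1 + t2)))) t1 t2
                 = (-1) * RInt (fun s => G s * H (t1 + t2 - s)) t1 t2).
  { rewrite <- RInt_scalR by integrable.
    apply RInt_ext. intros x _. unfold P, scal; simpl; unfold mult; simpl.
    replace (t1 + t2 - (-1 * x + (t1 + t2))) with x by ring.
    replace (-1 * x + (t1 + t2)) with (t1 + t2 - x) by ring. ring. }
  pose proof (eq_trans (eq_sym Hint) Hsub) as Hswap.
  unfold opp in Hswap; simpl in Hswap. lra.
Qed.

Lemma conv_quadratic p1 q1 p2 q2 e :
  cont_clamp p1 -> cont_clamp q1 -> cont_clamp p2 -> cont_clamp q2 ->
  conv (fun s => p1 s + e * q1 s) (fun s => p2 s + e * q2 s) t1 t2 =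
  conv p1 p2 t1 t2 + e * (conv p1 q2 t1 t2 + conv q1 p2 t1 t2)
  + e ^ 2 * conv q1 q2 t1 t2.
Proof.
  intros H1 H2 H3 H4. unfold conv.
  rewrite (RInt_extR _ (fun s => p1 s * p2 (t1 + t2 - s)
     + (e * (p1 s * q2 (t1 + t2 - s) + q1 s * p2 (t1 + t2 - s))
        + e ^ 2 * (q1 s * q2 (t1 + t2 - s)))) t1 t2) by (intros; ring).
  rewrite RInt_plusR, RInt_plusR, RInt_scalR, RInt_scalR, RInt_plusR; try ring;
    integrable.
Qed.

Lemma conv_affine_r p q1 q2 e : cont_clamp p -> cont_clamp q1 -> cont_clamp q2 ->
  conv p (fun s => q1 s + e * q2 s) t1 t2 = conv p q1 t1 t2 + e * conv p q2 t1 t2.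
Proof.
  intros H1 H2 H3. unfold conv.
  rewrite (RInt_extR _ (fun s => p s * q1 (t1 + t2 - s) + e * (p s * q2 (t1 + t2 - s)))
             t1 t2) by (intros; ring).
  rewrite RInt_plusR, RInt_scalR; try ring; integrable.
Qed.

Lemma conv_combination_l c1 c2 p q r h :
  cont_clamp p -> cont_clamp q -> cont_clamp r -> cont_clamp h ->
  conv (fun s => c1 * p s + c2 * q s - r s) h t1 t2
  = c1 * conv p h t1 t2 + c2 * conv q h t1 t2 - conv r h t1 t2.
Proof.
  intros Hp Hq Hr Hh. unfold conv.
  rewrite (RInt_extR _ (fun s => c1 * (p s * h (t1 + t2 - s)) + c2 * (q s * h (t1 + t2 - s))
                                - r s * h (t1 + t2 - s)) t1 t2) by (intros; ring).
  rewrite RInt_minusR, RInt_plusR, !RInt_scalR; try reflexivity;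
    integrable.
Qed.

Lemma conv_zero_l G H : (forall s, t1 < s < t2 -> G s = 0) -> conv G H t1 t2 = 0.
Proof.
  intros HG. unfold conv. rewrite (RInt_extR _ (fun _ => 0)).
  - rewrite RInt_const. unfold scal; simpl; unfold mult; simpl. ring.
  - intros x Hx. rewrite Rmin_left, Rmax_right in Hx by exact Hle.
    rewrite HG by exact Hx. ring.
Qed.

End Convolution.

(* It is the
   product rule for s |-> du(s) eta(t1 + t2 - s), with du extended past
   [t1,t2] by its tangent lines so that FTC applies. *)
Lemma conv_by_parts t1 t2 (du ddu eta deta : R -> R) : t1 < t2 ->
  deriv_on du ddu t1 t2 -> cont_on ddu t1 t2 ->
  (forall x, is_derive eta x (deta x)) -> (forall x, continuous deta x) -> eta t1 = 0 ->
  conv du deta t1 t2 = conv ddu eta t1 t2 + du t1 * eta t2.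
Proof.
  intros H12 Hdu Hddu Heta Hdeta Heta1.
  assert (Hle : t1 <= t2) by lra.
  assert (Ceta : cont_clamp t1 t2 eta)
    by (apply (cont_clamp_of_continuous t1 t2 Hle); intro; eapply is_derive_continuous; apply Heta).
  assert (Cdeta : cont_clamp t1 t2 deta) by (apply (cont_clamp_of_continuous t1 t2 Hle); exact Hdeta).
  assert (Cdu : cont_clamp t1 t2 du)
    by (apply (cont_clamp_of_cont_on t1 t2 Hle), (deriv_on_cont_on du ddu); assumption).
  assert (Cddu : cont_clamp t1 t2 ddu) by (apply (cont_clamp_of_cont_on t1 t2 Hle); assumption).
  set (eta_r := fun s => eta (t1 + t2 - s)).
  assert (Hprod : is_RInt (fun s => plus (scal (ddu (clamp t1 t2 s)) (eta_r s))
                                         (scal (ext du ddu t1 t2 s) (- deta (t1 + t2 - s))))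
                    t1 t2 (minus (scal (ext du ddu t1 t2 t2) (eta_r t2))
                                 (scal (ext du ddu t1 t2 t1) (eta_r t1)))).
  { apply (is_RInt_scal_derive (V := R_CompleteNormedModule)).
    - intros x Hx. rewrite Rmin_left, Rmax_right in Hx by exact Hle.
      rewrite clamp_id by exact Hx. apply ext_is_derive; assumption.
    - intros x _. unfold eta_r.
      replace (- deta (t1 + t2 - x)) with (deta (t1 + t2 - x) * -1) by ring.
      apply (is_derive_comp_R eta (fun s => t1 + t2 - s)); [apply Heta|].
      auto_derive; auto; ring.
    - intros x _. apply Cddu.
    - intros x _.
      apply (continuous_opp (V := R_NormedModule) (fun s => deta (t1 + t2 - s))).
      apply (continuous_comp (fun s => t1 + t2 - s) deta); [|apply Hdeta].
      apply (is_derive_continuous _ _ (-1)). auto_derive; auto; ring. }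
  apply (is_RInt_unique (V := R_CompleteNormedModule)) in Hprod.
  rewrite (RInt_extR _ (fun s => ddu s * eta (t1 + t2 - s) - du s * deta (t1 + t2 - s)))
    in Hprod.
  2: { intros x Hx. rewrite Rmin_left, Rmax_right in Hx by exact Hle.
       rewrite clamp_id, ext_eq by lra. unfold eta_r, plus, scal; simpl.
       unfold mult; simpl. ring. }
  rewrite RInt_minusR in Hprod
    by (apply cont_clamp_ex_RInt, cont_clamp_conv; assumption).
  unfold eta_r, minus, plus, opp, scal in Hprod; simpl in Hprod. unfold mult in Hprod; simpl in Hprod.
  rewrite !ext_eq in Hprod by lra.
  replace (t1 + t2 - t2) with t1 in Hprod by ring.
  replace (t1 + t2 - t1) with t2 in Hprod by ring.
  rewrite Heta1 in Hprod. unfold conv. lra.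
Qed.

Lemma It_first_variation t1 t2 m k v1 (f u du ddu eta deta : R -> R) :
  t1 < t2 -> cont_on f t1 t2 -> C2_on u du ddu t1 t2 ->
  (forall x, is_derive eta x (deta x)) -> (forall x, continuous deta x) -> eta t1 = 0 ->
  is_derive (fun e => It m k v1 t1 t2 f (fun s => u s + e * eta s)
                                       (fun s => du s + e * deta s)) 0
    (conv (fun s => m * ddu s + k * u s - f s) eta t1 t2 + m * (du t1 - v1) * eta t2).
Proof.
  intros H12 Hf [Hu [Hdu Hddu]] Heta Hdeta Heta1.
  assert (Hle : t1 <= t2) by lra.
  assert (Cf : cont_clamp t1 t2 f) by (apply (cont_clamp_of_cont_on t1 t2 Hle); exact Hf).
  assert (Cdu : cont_clamp t1 t2 du)
    by (apply (cont_clamp_of_cont_on t1 t2 Hle), (deriv_on_cont_on du ddu); assumption).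
  assert (Cu : cont_clamp t1 t2 u)
    by (apply (cont_clamp_of_cont_on t1 t2 Hle), (deriv_on_cont_on u du); assumption).
  assert (Cddu : cont_clamp t1 t2 ddu) by (apply (cont_clamp_of_cont_on t1 t2 Hle); exact Hddu).
  assert (Ceta : cont_clamp t1 t2 eta)
    by (apply (cont_clamp_of_continuous t1 t2 Hle); intro; eapply is_derive_continuous; apply Heta).
  assert (Cdeta : cont_clamp t1 t2 deta) by (apply (cont_clamp_of_continuous t1 t2 Hle); exact Hdeta).
  set (slope := m / 2 * (conv du deta t1 t2 + conv deta du t1 t2)
                + k / 2 * (conv u eta t1 t2 + conv eta u t1 t2)
                - conv f eta t1 t2 - m * v1 * eta t2).
  set (curv := m / 2 * conv deta deta t1 t2 + k / 2 * conv eta eta t1 t2).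
  assert (Hquad : forall e, It m k v1 t1 t2 f (fun s => u s + e * eta s)
                                             (fun s => du s + e * deta s)
                            = It m k v1 t1 t2 f u du + slope * e + curv * e ^ 2).
  { intros e. unfold It.
    rewrite !conv_quadratic, conv_affine_r by assumption.
    unfold slope, curv. ring. }
  assert (Hslope : slope = conv (fun s => m * ddu s + k * u s - f s) eta t1 t2
                           + m * (du t1 - v1) * eta t2).
  { unfold slope.
    rewrite (conv_sym t1 t2 Hle deta du), (conv_sym t1 t2 Hle eta u) by assumption.
    rewrite (conv_by_parts t1 t2 du ddu eta deta), conv_combination_l by assumption.
    field. }
  rewrite <- Hslope.
  apply (is_derive_ext (fun e => It m k v1 t1 t2 f u du + slope * e + curv * e ^ 2));
    [intros e; symmetry; apply Hquad|].
  auto_derive; auto; ring.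
Qed.

Lemma sign_persistence t1 t2 (g : R -> R) s0 : t1 <= t2 -> cont_clamp t1 t2 g ->
  t1 < s0 < t2 -> g s0 <> 0 ->
  exists r, 0 < r /\ t1 <= s0 - r /\ s0 + r <= t2 /\
    forall x, s0 - r < x < s0 + r -> 0 < g s0 * g x.
Proof.
  intros Hle Hg Hs0 Hne.
  assert (Hc : 0 < Rabs (g s0)) by (apply Rabs_pos_lt; exact Hne).
  pose proof (Hg s0) as Hcont. apply continuity_pt_filterlim in Hcont.
  destruct (Hcont (Rabs (g s0)) Hc) as [d [Hd Hy]].
  pose proof (Rmin_l d (Rmin (s0 - t1) (t2 - s0))).
  pose proof (Rmin_r d (Rmin (s0 - t1) (t2 - s0))).
  pose proof (Rmin_l (s0 - t1) (t2 - s0)). pose proof (Rmin_r (s0 - t1) (t2 - s0)).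
  exists (Rmin d (Rmin (s0 - t1) (t2 - s0))).
  split; [apply Rmin_pos; [exact Hd | apply Rmin_pos; lra]|].
  split; [lra|]. split; [lra|]. intros x Hx.
  assert (Hclose : Rabs (g x - g s0) < Rabs (g s0)).
  { destruct (Req_dec x s0) as [->|Hxs]; [rewrite Rminus_diag, Rabs_R0; exact Hc|].
    pose proof (Hy x) as Hyx. simpl in Hyx. unfold R_dist in Hyx.
    rewrite (clamp_id t1 t2 x), (clamp_id t1 t2 s0) in Hyx by lra.
    apply Hyx. split; [split; [exact I | congruence] | apply Rabs_def1; lra]. }
  apply Rabs_def2 in Hclose. unfold Rabs in Hclose; destruct Rcase_abs; nra.
Qed.

Lemma RInt_pos_of_pos_on_subinterval t1 t2 a b (h : R -> R) :
  t1 <= a -> a < b -> b <= t2 -> cont_clamp t1 t2 h ->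
  (forall x, t1 <= x <= t2 -> 0 <= h x) -> (forall x, a < x < b -> 0 < h x) ->
  0 < RInt h t1 t2.
Proof.
  intros Ha Hab Hb Hh Hnn Hpos.
  assert (Hex : ex_RInt h t1 t2) by (apply cont_clamp_ex_RInt; [lra | exact Hh]).
  assert (ex1 : ex_RInt h t1 a) by (apply (ex_RInt_Chasles_1 h t1 a t2); [lra | exact Hex]).
  assert (ex2 : ex_RInt h a t2) by (apply (ex_RInt_Chasles_2 h t1 a t2); [lra | exact Hex]).
  assert (ex3 : ex_RInt h a b) by (apply (ex_RInt_Chasles_1 h a b t2); [lra | exact ex2]).
  assert (ex4 : ex_RInt h b t2) by (apply (ex_RInt_Chasles_2 h a b t2); [lra | exact ex2]).
  pose proof (RInt_Chasles h t1 a t2 ex1 ex2) as Split1.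
  pose proof (RInt_Chasles h a b t2 ex3 ex4) as Split2.
  unfold plus in Split1, Split2; simpl in Split1, Split2.
  assert (Left : 0 <= RInt h t1 a)
    by (apply RInt_ge_0; [lra | exact ex1 | intros; apply Hnn; lra]).
  assert (Right : 0 <= RInt h b t2)
    by (apply RInt_ge_0; [lra | exact ex4 | intros; apply Hnn; lra]).
  assert (Middle : 0 < RInt h a b).
  { rewrite (RInt_extR h (fun x => h (clamp t1 t2 x))).
    - apply RInt_gt_0; [exact Hab | | intros; apply Hh].
      intros x Hx. rewrite clamp_id by lra. apply Hpos; exact Hx.
    - intros x Hx. rewrite Rmin_left, Rmax_right in Hx by lra.
      rewrite clamp_id; [reflexivity | lra]. }
  lra.
Qed.

Lemma fundamental_lemma t1 t2 (g : R -> R) : t1 <= t2 -> cont_clamp t1 t2 g ->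
  (forall a b, t1 <= a -> a < b -> b <= t2 -> RInt (fun s => g s * bump a b s) t1 t2 = 0) ->
  forall s, t1 < s < t2 -> g s = 0.
Proof.
  intros Hle Hg Horth s0 Hs0.
  destruct (Req_dec (g s0) 0) as [|Hne]; [assumption | exfalso].
  destruct (sign_persistence t1 t2 g s0 Hle Hg Hs0 Hne) as [r [Hr [Hr1 [Hr2 Hsign]]]].
  assert (Cbump : cont_clamp t1 t2 (fun s => g s * bump (s0 - r) (s0 + r) s)).
  { apply cont_clamp_mult; [exact Hg|].
    apply (cont_clamp_of_continuous t1 t2 Hle). intros x.
    apply (is_derive_continuous _ _ _ (bump_derive _ _ x)). }
  assert (Hzero : RInt (fun s => g s0 * (g s * bump (s0 - r) (s0 + r) s)) t1 t2 = 0).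
  { rewrite RInt_scalR by exact (cont_clamp_ex_RInt t1 t2 Hle _ Cbump).
    rewrite Horth by lra. apply Rmult_0_r. }
  assert (Hpos : 0 < RInt (fun s => g s0 * (g s * bump (s0 - r) (s0 + r) s)) t1 t2).
  { apply (RInt_pos_of_pos_on_subinterval t1 t2 (s0 - r) (s0 + r)); try lra.
    - apply cont_clamp_scal, Cbump.
    - intros x Hx. destruct (Rlt_dec (s0 - r) x), (Rlt_dec x (s0 + r)).
      + pose proof (Hsign x (conj r0 r1)). pose proof (bump_nonneg (s0 - r) (s0 + r) x). nra.
      + rewrite bump_out by nra. lra.
      + rewrite bump_out by nra. lra.
      + rewrite bump_out by nra. lra.
    - intros x Hx. pose proof (Hsign x Hx). pose proof (bump_pos (s0 - r) (s0 + r) x Hx).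
      rewrite <- Rmult_assoc. apply Rmult_lt_0_compat; assumption. }
  lra.
Qed.

Lemma conv_reflected_bump t1 t2 (g : R -> R) a b :
  conv g (bump (t1 + t2 - b) (t1 + t2 - a)) t1 t2 = RInt (fun s => g s * bump a b s) t1 t2.
Proof. unfold conv. apply RInt_extR. intros x _. rewrite bump_reflect. reflexivity. Qed.

Lemma stationary_weak_form t1 t2 m k v1 (f u du ddu : R -> R) :
  t1 < t2 -> cont_on f t1 t2 -> C2_on u du ddu t1 t2 ->
  (forall eta deta ddeta : R -> R,
      C2_on eta deta ddeta t1 t2 -> eta t1 = 0 ->
      is_derive (fun e => It m k v1 t1 t2 f (fun s => u s + e * eta s)
                                           (fun s => du s + e * deta s)) 0 0) ->
  forall eta deta ddeta : R -> R,
    (forall x, is_derive eta x (deta x)) -> (forall x, is_derive deta x (ddeta x)) ->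
    (forall x, continuous ddeta x) -> eta t1 = 0 ->
    conv (fun s => m * ddu s + k * u s - f s) eta t1 t2 + m * (du t1 - v1) * eta t2 = 0.
Proof.
  intros H12 Hf Hu Hvar eta deta ddeta H1 H2 H3 H0.
  assert (Hdeta : forall x, continuous deta x)
    by (intro x; exact (is_derive_continuous _ _ _ (H2 x))).
  rewrite <- (is_derive_unique _ _ _
                (It_first_variation t1 t2 m k v1 f u du ddu eta deta H12 Hf Hu H1 Hdeta H0)).
  exact (is_derive_unique _ _ _ (Hvar eta deta ddeta (C2_on_of_global _ _ _ _ _ H1 H2 H3) H0)).
Qed.

Theorem proposition2 (t1 t2 m k u1 v1 : R) (f u du ddu : R -> R) :
  0 <= t1 -> t1 < t2 -> 0 < m -> 0 < k ->
  cont_on f t1 t2 ->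
  C2_on u du ddu t1 t2 -> u t1 = u1 ->
  (forall eta deta ddeta : R -> R,
      C2_on eta deta ddeta t1 t2 -> eta t1 = 0 ->
      is_derive (fun e => It m k v1 t1 t2 f (fun s => u s + e * eta s)
                                           (fun s => du s + e * deta s)) 0 0) ->
  (forall s, t1 < s < t2 -> m * ddu s + k * u s = f s) /\
  u t1 = u1 /\ du t1 = v1.
Proof.
  intros _ H12 Hm _ Hf Hu Hu1 Hvar.
  assert (Hle : t1 <= t2) by lra.
  pose proof (stationary_weak_form t1 t2 m k v1 f u du ddu H12 Hf Hu Hvar) as Hweak.
  set (g := fun s => m * ddu s + k * u s - f s) in Hweak.
  assert (Hint : forall s, t1 < s < t2 -> g s = 0).
  { apply (fundamental_lemma t1 t2 g Hle).
    - destruct Hu as [Hdu1 [Hdu2 Hddu]].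
      apply cont_clamp_minus; [apply cont_clamp_plus; apply cont_clamp_scal|];
        apply (cont_clamp_of_cont_on t1 t2 Hle);
        [exact Hddu | apply (deriv_on_cont_on u du); assumption | exact Hf].
    - intros a b Ha Hab Hb. rewrite <- conv_reflected_bump.
      pose proof (Hweak _ _ _ (bump_derive (t1 + t2 - b) (t1 + t2 - a))
                    (dbump_derive _ _) (ddbump_cont _ _)) as Hbump.
      rewrite (bump_out _ _ t2), Rmult_0_r, Rplus_0_r in Hbump by nra.
      apply Hbump, bump_out. nra. }
  assert (Hvel : conv g (fun r => r - t1) t1 t2 + m * (du t1 - v1) * (t2 - t1) = 0).
  { apply (Hweak (fun r => r - t1) (fun _ => 1) (fun _ => 0));
      [intros; auto_derive; auto; ring | intros; auto_derive; auto; ring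
      | intros; apply continuous_const | ring]. }
  rewrite (conv_zero_l t1 t2 Hle g _ Hint), Rplus_0_l in Hvel.
  split; [|split; [exact Hu1|]].
  - intros s Hs. pose proof (Hint s Hs). unfold g in *. lra.
  - apply Rmult_integral in Hvel. destruct Hvel as [Hz|Hz]; nra.
Qed.
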